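(* Let $i\in\{3\frac{1}{2},4,5\}$. Let $\mathscr{P}$ be a topological property which is closed hereditary, co-local, and preserved under finite closed sums. A locally connected $T_i$-space $X$ having $\mathscr{P}$ has a $T_i$ one-point connectification having $\mathscr{P}$ if and only if $X$ has no compact component.
   Context: Conventions: $T_{3\frac12}$ = completely regular and $T_1$; $T_4$ = normal and $T_1$; $T_5$ = hereditarily normal (every subspace normal) and $T_1$. A one-point connectification of a space $X$ is a connected space $Y$ which contains $X$ as a dense subspace and such that $Y\setminus X$ is a singleton. A topological property $\mathscr{P}$ is: closed hereditary if every closed subspace of a space with $\mathscr{P}$ has $\mathscr{P}$; preserved under finite closed sums if every space which is a finite union of closed subspaces each having $\mathscr{P}$ has $\mathscr{P}$; co-local if a space $X$ has $\mathscr{P}$ whenever there are a point $p\in X$ and an open base $\mathfrak{B}$ at $p$ such that $X\setminus B$ has $\mathscr{P}$ for every $B\in\mathfrak{B}$. *)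

From mathcomp Require Import all_boot all_classical all_reals all_analysis.

Set Implicit Arguments.
Unset Strict Implicit.
Unset Printing Implicit Defensive.

Local Open Scope classical_set_scope.

(* Subspaces are the library's [set_type A] (written [A] coerced to a Type),
   which carries the initial (= subspace) topology of the inclusion. *)

Definition homeomorphic (X Y : topologicalType) : Prop :=
  exists (f : X -> Y) (g : Y -> X),
    [/\ continuous f, continuous g, cancel f g & cancel g f].

Definition topological_property (P : topologicalType -> Prop) : Prop :=
  forall X Y : topologicalType, homeomorphic X Y -> P X -> P Y.

Definition closed_hereditary (P : topologicalType -> Prop) : Prop :=
  forall (X : topologicalType) (A : set X), P X -> closed A -> P (set_type A).

Definition finite_closed_sums (P : topologicalType -> Prop) : Prop :=
  forall (X : topologicalType) (S : set (set X)),
    finite_set S ->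
    (forall A, S A -> closed A /\ P (set_type A)) ->
    \bigcup_(A in S) A = setT -> P X.

Definition open_base_at (X : topologicalType) (p : X) (Bs : set (set X)) : Prop :=
  (forall B, Bs B -> open B /\ B p) /\
  (forall N, nbhs p N -> exists2 B, Bs B & B `<=` N).

Definition co_local (P : topologicalType -> Prop) : Prop :=
  forall X : topologicalType,
    (exists (p : X) (Bs : set (set X)),
        open_base_at p Bs /\ forall B, Bs B -> P (set_type (~` B))) ->
    P X.

Definition locally_connected (X : topologicalType) : Prop :=
  forall (x : X) (U : set X), nbhs x U ->
    exists V : set X, [/\ open V, V x, connected V & V `<=` U].

Inductive sep_index := T3half | T4 | T5.

Definition Ti (i : sep_index) (X : topologicalType) : Prop :=
  match i with
  | T3half => completely_regular_space X /\ accessible_space X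
  | T4 => normal_space X /\ accessible_space X
  | T5 => (forall A : set X, normal_space (set_type A)) /\ accessible_space X
  end.

Definition embedding (X Y : topologicalType) (f : X -> Y) : Prop :=
  [/\ injective f, continuous f &
      forall U : set X, open U -> exists2 V : set Y, open V & f @` U = range f `&` V].

Definition one_point_connectification (X Y : topologicalType) (f : X -> Y) : Prop :=
  [/\ embedding f, connected (@setT Y), dense (range f) &
      exists p : Y, ~` range f = [set p]].

From HB Require Import structures.
From mathcomp Require Import all_boot all_order all_algebra all_classical all_reals all_analysis.
From mathcomp Require Import lra Rstruct.
Import Order.TTheory GRing.Theory Num.Theory numFieldNormedType.Exports.

Local Open Scope classical_set_scope.
Local Open Scope ring_scope.

(* A compact component [C] of a locally connected space [X] is clopen. In a
   one-point connectification [Y] that is T_1 and completely regular, hence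
   Hausdorff, the image of [C] is compact, hence closed, and open because [X] is
   open in [Y]; by connectedness it would be all of [Y].

   Conversely, every component [K], being noncompact, lies in a proper filter
   [F_K] without cluster points. Adjoin to [X] a point whose basic neighbourhoods
   are the sets {h < 1} plus the new point, where [h] ranges over the continuous
   real functions eventually below every [e > 0] along every [F_K]. Every
   component then accumulates at the new point, so the extension is connected;
   separating functions on [X] extend to it; a subspace [S] of the extension is
   normal as soon as the subspaces of [X] of the forms [S ∩ X] and [(S ∩ X) ∪ A],
   with [A] closed, are; and the complement of a basic neighbourhood of the new
   point is a copy of a closed subspace of [X], so co-locality transfers [P]. *)

Section clamp.
Context {R : realType}.

Definition clamp (r : R) : R := Num.min 1 (Num.max 0 r).

Lemma clamp_continuous : continuous clamp.
Proof.
move=> x; apply: (@continuous_min R R (fun=> 1) (fun r => Num.max 0 r)).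
  exact: cst_continuous.
by apply: (@continuous_max R R (fun=> 0) id) => //; exact: cst_continuous.
Qed.

Local Ltac clamp_cases r := rewrite /clamp maxEle minEle;
  case: (leP 0 r) => ?; [case: (leP 1 r) => ? | case: (leP (1 : R) 0) => ?]; lra.

Lemma clamp_itv r : 0 <= clamp r <= 1.
Proof. by apply/andP; split; clamp_cases r. Qed.

Lemma clamp_lt r e : 0 < e -> r < e -> clamp r < e.
Proof. by move=> *; clamp_cases r. Qed.

Lemma clamp_gt r e : 0 < e -> 1 - e < r -> 1 - e < clamp r.
Proof. by move=> *; clamp_cases r. Qed.

Lemma clamp_ge1 r : 1 <= r -> clamp r = 1.
Proof. by move=> *; clamp_cases r. Qed.

Lemma clamp_le0 r : r <= 0 -> clamp r = 0.
Proof. by move=> *; clamp_cases r. Qed.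

End clamp.

Section relative_normality.
Context {T : topologicalType}.
Implicit Types (S E G : set T).

Definition rel_closed S E := E `<=` S /\ closure E `&` S `<=` E.

Definition rel_separated S E G := exists Q1 Q2 : set T,
  [/\ open Q1, open Q2, E `<=` Q1, G `<=` Q2 & Q1 `&` Q2 `&` S = set0].

Definition rel_normal S := forall E G,
  rel_closed S E -> rel_closed S G -> E `&` G = set0 -> rel_separated S E G.

Lemma rel_separatedC S E G : rel_separated S E G -> rel_separated S G E.
Proof.
by move=> [Q1 [Q2 [? ? ? ? QQ]]]; exists Q2, Q1; split => //; rewrite (setIC Q2).
Qed.

Lemma open_subspaceP S (U : set (set_type S)) :
  open U <-> exists2 V : set T, open V & (fun z : set_type S => V (val z)) = U.
Proof. by split; case=> V oV <-; exists V. Qed.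

Lemma rel_closed_subspace {S E} :
  rel_closed S E -> closed (fun z : set_type S => E (val z)).
Proof.
move=> [ES clE]; rewrite -openC; apply/open_subspaceP.
exists (~` closure E); first exact/closed_openC/closed_closure.
apply/seteqP; split => z /=.
  by move=> nclz Ez; apply: nclz; exact: subset_closure.
by move=> nEz clz; apply: nEz; apply: clE; split => //; exact: set_valP.
Qed.

Lemma closed_subspace_rel_closed {S} {F : set (set_type S)} :
  closed F -> rel_closed S (val @` F).
Proof.
move=> clF; split => [_ [z _ <-]|x [clx Sx]]; first exact: set_valP.
pose xS : set_type S := exist _ x (mem_set Sx).
apply: contrapT => nFx.
have /open_subspaceP [W oW WF] : open (~` F) by rewrite openC.
have Wx : W x.
  have : (~` F) xS by move=> Fx; apply: nFx; exists xS.
  by rewrite -WF.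
rewrite closureEnbhs in clx.
have [_ [[z Fz <-] Wz]] := clx (val @` F) W (fun _ => id) (open_nbhs_nbhs (conj oW Wx)).
by have : (~` F) z by rewrite -WF.
Qed.

Lemma normal_subspace_rel_normal S : normal_space (set_type S) -> rel_normal S.
Proof.
move=> /(@normal_openP Rdefinitions.R) nS E G rcE rcG EG.
have [[ES _] [GS _]] := (rcE, rcG).
have EG' : (fun z : set_type S => E (val z)) `&` (fun z => G (val z)) = set0.
  by apply/seteqP; split => // z [Ez Gz]; have : (E `&` G) (val z) by []; rewrite EG.
have [U [V [oU oV EU GV UV]]] :=
  nS _ _ (rel_closed_subspace rcE) (rel_closed_subspace rcG) EG'.
case/open_subspaceP: oU => Q1 oQ1 Q1U; case/open_subspaceP: oV => Q2 oQ2 Q2V.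
exists Q1, Q2; split => //.
- move=> x Ex; have /EU := Ex : E (val (exist _ x (mem_set (ES _ Ex)))).
  by rewrite -Q1U.
- move=> x Gx; have /GV := Gx : G (val (exist _ x (mem_set (GS _ Gx)))).
  by rewrite -Q2V.
- apply/seteqP; split => // x [[Q1x Q2x] Sx].
  have : (U `&` V) (exist _ x (mem_set Sx)) by rewrite -Q1U -Q2V.
  by rewrite UV.
Qed.

Lemma rel_normal_normal_subspace S : rel_normal S -> normal_space (set_type S).
Proof.
move=> nS; apply/(@normal_openP Rdefinitions.R) => E G cE cG EG.
have EG0 : val @` E `&` val @` G = set0.
  apply/seteqP; split => // _ [[z Ez <-] [w Gw /val_inj wz]]; subst w.
  by have : (E `&` G) z by []; rewrite EG.
have [Q1 [Q2 [oQ1 oQ2 EQ GQ QQ]]] := nS _ _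
  (closed_subspace_rel_closed cE) (closed_subspace_rel_closed cG) EG0.
exists (fun z => Q1 (val z)), (fun z => Q2 (val z)); split.
- by apply/open_subspaceP; exists Q1.
- by apply/open_subspaceP; exists Q2.
- by move=> z Ez; apply: EQ; exists z.
- by move=> z Gz; apply: GQ; exists z.
- apply/seteqP; split => // z [Q1z Q2z].
  have : (Q1 `&` Q2 `&` S) (val z) by split => //; exact: set_valP.
  by rewrite QQ.
Qed.

Lemma normal_subspaceP S : normal_space (set_type S) <-> rel_normal S.
Proof.
by split; [exact: normal_subspace_rel_normal|exact: rel_normal_normal_subspace].
Qed.

Lemma rel_closedT E : rel_closed [set: T] E <-> closed E.
Proof.
split=> [[_ clE]|clE]; last by split => // x [+ _]; rewrite -(closure_id _).1.
rewrite (closure_id E); apply/seteqP; split => [|x clx]; first exact: subset_closure.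
exact: clE.
Qed.

Lemma normal_rel_normalT : normal_space T <-> rel_normal [set: T].
Proof.
rewrite (@normal_openP Rdefinitions.R); split=> nT E G.
  move=> /rel_closedT cE /rel_closedT cG EG.
  have [U [V [oU oV EU GV UV]]] := nT E G cE cG EG.
  by exists U, V; split => //; rewrite UV set0I.
move=> /rel_closedT cE /rel_closedT cG EG.
have [U [V [oU oV EU GV UV]]] := nT E G cE cG EG.
by exists U, V; split => //; rewrite -UV setIT.
Qed.

End relative_normality.

Lemma completely_regularP {R : realType} {T : topologicalType} :
  completely_regular_space T <->
  forall (x : T) (B : set T), closed B -> ~ B x ->
  exists f : T -> R, [/\ continuous f, forall z, 0 <= f z <= 1, f x = 0 &
                      forall z, B z -> f z = 1].
Proof.
split=> crT x B cB nBx.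
  have /(@uniform_separatorP _ R) [f [cf f01 fx fB]] := crT x B cB nBx.
  exists f; split => //.
  - by move=> z; have := f01 (f z) (ex_intro2 _ _ z I erefl); rewrite /= in_itv.
  - by apply: fx; exists x.
  - by move=> z Bz; apply: fB; exists z.
apply/(@uniform_separatorP _ R); have [f [cf f01 fx fB]] := crT x B cB nBx.
exists f; split => //.
- by move=> _ [z _ <-]; rewrite /= in_itv /=; exact: f01.
- by move=> _ [z -> <-].
- by move=> _ [z Bz <-]; rewrite /= fB.
Qed.

Section separation_axioms.
Context {T : topologicalType}.

Lemma completely_regular_hausdorff :
  completely_regular_space T -> accessible_space T -> hausdorff_space T.
Proof.
move=> /(@completely_regularP Rdefinitions.R) crT acc; rewrite open_hausdorff => x y xy.
have ny : ~ [set y] x by move=> /= E; rewrite E eqxx in xy.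
have [f [cf _ fx fy]] := crT x [set y] (@accessible_closed_set1 T acc y) ny.
exists (f @^-1` [set r | r < 2^-1], f @^-1` [set r | 2^-1 < r]) => /=.
  by rewrite !inE /= fx (fy y erefl); split; lra.
split.
- by apply: open_comp; [move=> z _; exact: cf|exact: open_lt].
- by apply: open_comp; [move=> z _; exact: cf|exact: open_gt].
- by apply/eqP/seteqP; split => // z [/= ? ?]; lra.
Qed.

Lemma Ti_completely_regular {i} :
  Ti i T -> completely_regular_space T /\ accessible_space T.
Proof.
case: i => //= -[nT aT]; split => //;
  apply: (@normal_completely_regular Rdefinitions.R) => //.
by apply/normal_rel_normalT; have /normal_subspaceP := nT setT.
Qed.

Lemma locally_connected_component_open (x : T) :
  locally_connected T -> open (connected_component [set: T] x).
Proof.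
move=> lcT; rewrite openE => y Kxy.
have [V [oV Vy cV _]] := lcT y setT filterT.
have VK : V `<=` connected_component [set: T] y by apply: connected_component_max.
rewrite /interior (same_connected_component Kxy).
by apply: filterS VK _; exact: open_nbhs_nbhs.
Qed.

End separation_axioms.

Lemma connectification_no_compact_component i (X Y : topologicalType) (f : X -> Y) :
  locally_connected X -> Ti i Y -> one_point_connectification f ->
  forall x, ~ compact (connected_component [set: X] x).
Proof.
move=> lcX TiY [[finj fc femb] connY _ [p Yp]] x cptC.
have [crY accY] := Ti_completely_regular TiY.
set C := connected_component [set: X] x.
have clfC : closed (f @` C).
  apply: compact_closed; first exact: completely_regular_hausdorff.
  by apply: continuous_compact => //; exact: continuous_subspaceT.
have [V oV fCV] := femb C (locally_connected_component_open x lcX).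
have open_range : open (range f).
  by rewrite -[range f]setCK Yp; exact/closed_openC/accessible_closed_set1.
have ofC : open (f @` C) by rewrite fCV; exact: openI.
have fCT : f @` C = [set: Y].
  apply: connY.
  - by exists (f x); exists x => //; exact: connected_component_refl.
  - by exists (f @` C) => //; rewrite setTI.
  - by exists (f @` C) => //; rewrite setTI.
have : (~` range f) p by rewrite Yp.
apply; have [z _ <-] : (f @` C) p by rewrite fCT.
by exists z.
Qed.

Definition escaping {T : topologicalType} (C : set T) (F : set_system T) :=
  [/\ ProperFilter F, F C & forall y, ~ cluster F y].

Lemma closed_noncompact_escaping {T : topologicalType} (C : set T) :
  closed C -> ~ compact C -> exists F, escaping C F.
Proof.
move=> clC /existsNP [F] /not_implyP [PF] /not_implyP [FC].
move=> /set0P/negP; rewrite negbK => /eqP Ccl0.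
exists F; split => // y Fy; suff : (C `&` cluster F) y by rewrite Ccl0.
split => //; rewrite ((closure_id C).1 clC) closureEnbhs => B D GB ND.
by apply: Fy => //; apply: filterS FC.
Qed.

Lemma continuous_lt_nbhs {R : realType} {T : topologicalType} {h : T -> R} {c z} :
  continuous h -> h z < c -> nbhs z [set x | h x < c].
Proof.
move=> ch hz; apply: (ch z [set r | r < c]).
by apply: open_nbhs_nbhs; split => //; exact: open_lt.
Qed.

Section one_point_connectification.
Context {R : realType} {X : topologicalType}.
Hypothesis no_compact_component :
  forall x : X, ~ compact (connected_component [set: X] x).

Local Notation component x := (connected_component [set: X] x).

Definition escaping_filter (x : X) : set_system X := get (escaping (component x)).

Lemma escaping_filterP x : escaping (component x) (escaping_filter x).
Proof.
apply: getPex; apply: closed_noncompact_escaping; last exact: no_compact_component.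
exact/component_closed/closedT.
Qed.

#[local] Instance escaping_filter_proper x : ProperFilter (escaping_filter x).
Proof. by case: (escaping_filterP x). Qed.

Definition vanishing : set (X -> R) := [set h : X -> R | continuous h /\
  forall x (e : R), 0 < e -> escaping_filter x [set y | h y < e]].

Lemma vanishing_cst0 : vanishing (fun=> 0).
Proof. by split=> [|x e e0]; [exact: cst_continuous|exact: filterS filterT]. Qed.

Lemma vanishing_max h1 h2 : vanishing h1 -> vanishing h2 -> vanishing (h1 \max h2).
Proof.
move=> [c1 v1] [c2 v2]; split=> [|x e e0]; first exact: max_fun_continuous.
apply: filterS (filterI (v1 x e e0) (v2 x e e0)) => y [/= ? ?].
by rewrite gt_max; apply/andP.
Qed.

Lemma vanishing_scale c h : 0 < c -> vanishing h -> vanishing (fun x => c * h x).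
Proof.
move=> c0 [ch vh]; split=> [x|x e e0].
  exact: (continuousM (@cst_continuous _ R c x) (ch x)).
apply: filterS (vh x _ (divr_gt0 e0 c0)) => y /= hy.
by rewrite -ltr_pdivlMl // mulrC.
Qed.

Lemma vanishing_lt {h e} : 0 < e -> vanishing h ->
  exists2 h', vanishing h' & forall x, h' x < 1 -> h x < e.
Proof.
move=> e0 vh; exists (fun x => e^-1 * h x).
  by apply: vanishing_scale => //; rewrite invr_gt0.
by move=> x; rewrite ltr_pdivrMl // mulr1.
Qed.

Definition Xstar : Type := option X.
HB.instance Definition _ := Choice.on Xstar.
HB.instance Definition _ := Pointed.on Xstar.

Definition basic_inf (h : X -> R) : set Xstar :=
  fun y => if y is Some x then h x < 1 else True.

Definition Xstar_nbhs (y : Xstar) : set_system Xstar :=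
  if y is Some x then Some @ nbhs x else filter_from vanishing basic_inf.

Let Xstar_nbhs_filter (y : Xstar) : ProperFilter (Xstar_nbhs y).
Proof.
case: y => [x|]; first exact: fmap_proper_filter.
apply: filter_from_proper; last by move=> ? _; exists None.
apply: filter_from_filter; first by exists (fun=> 0); exact: vanishing_cst0.
move=> h1 h2 v1 v2; exists (h1 \max h2); first exact: vanishing_max.
by case=> [x|//] /=; rewrite gt_max => /andP[].
Qed.

Let Xstar_nbhs_singleton (y : Xstar) U : Xstar_nbhs y U -> U y.
Proof. by case: y => [x /= /nbhs_singleton//|[h _]]; apply. Qed.

Let Xstar_nbhs_nbhs (y : Xstar) (A : set Xstar) :
  Xstar_nbhs y A -> Xstar_nbhs y (Xstar_nbhs^~ A).
Proof.
case: y => [x /=|[h vh hA] /=].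
  rewrite nbhs_simpl nbhsE => -[U [oU Ux] UA /=].
  by exists U => //= z /=; rewrite nbhs_simpl nbhsE => Uz; exists U.
exists h => // -[z|_] /=; last by exists h.
move=> hz; rewrite nbhs_simpl.
by move: (continuous_lt_nbhs vh.1 hz); apply: filterS => t ht; apply: hA.
Qed.

HB.instance Definition _ := hasNbhs.Build Xstar Xstar_nbhs.
HB.instance Definition _ := @Nbhs_isNbhsTopological.Build Xstar
  Xstar_nbhs_filter Xstar_nbhs_singleton Xstar_nbhs_nbhs.

Lemma nbhs_Some x (U : set Xstar) : nbhs (Some x : Xstar) U = nbhs x (Some @^-1` U).
Proof. by []. Qed.

Lemma Xstar_openP (W : set Xstar) : open W <->
  (forall x, W (Some x) -> nbhs x (Some @^-1` W)) /\
  (W None -> exists2 h, vanishing h & basic_inf h `<=` W).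
Proof.
rewrite openE; split=> [WW|[WS WN] [x /WS|/WN] //].
by split=> [x /WW|/WW].
Qed.

Lemma open_Some_image (U : set X) : open U -> open (Some @` U : set Xstar).
Proof.
move=> oU; apply/Xstar_openP; split => [x [y Uy [<-]]|[] //].
by rewrite openE in oU; apply: filterS (oU _ Uy) => z Uz; exists z.
Qed.

Lemma basic_inf_open h : vanishing h -> open (basic_inf h).
Proof.
move=> vh; apply/Xstar_openP; split => [x /= hx|_]; last by exists h.
exact: continuous_lt_nbhs vh.1 hx.
Qed.

Lemma Some_continuous : continuous (Some : X -> Xstar).
Proof. by move=> x U. Qed.

Lemma Some_embedding : embedding (Some : X -> Xstar).
Proof.
split=> [a b []//||U oU]; first exact: Some_continuous.
exists (Some @` U); first exact: open_Some_image.
by rewrite setIidr // => _ [x _ <-]; exists x.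
Qed.

Lemma Xstar_range_compl : ~` range (Some : X -> Xstar) = [set None].
Proof.
apply/seteqP; split => [[y|] //= nr|_ ->]; last by move=> [].
by exfalso; apply: nr; exists y.
Qed.

Hypothesis lcX : locally_connected X.
Hypothesis crX : completely_regular_space X.

Lemma vanishing_meets_component x {h} :
  vanishing h -> exists y, component x y /\ h y < 1.
Proof.
move=> [_ vh]; have [_ FK _] := escaping_filterP x.
have /filter_ex [y [Kxy hy]] : escaping_filter x (component x `&` [set y | h y < 1]).
  exact: filterI FK (vh x 1 ltr01).
by exists y.
Qed.

(* [x0] has a neighbourhood [W] inside its component missing some member [A] of
   its escaping filter; [1 - f], for a Urysohn function [f] of [W], vanishes off
   [W], hence on [A] and on every other component. *)
Lemma vanishing_separating x0 : exists2 k, vanishing k & k x0 = 1.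
Proof.
have [_ _ Fx0nc] := escaping_filterP x0.
have := Fx0nc x0; rewrite /cluster /meets /= => /existsNP [A] /existsNP [V].
move=> /not_implyP [FA] /not_implyP [NV] /set0P/negP; rewrite negbK => /eqP AV0.
pose W := V `&` component x0.
have NW : nbhs x0 W.
  apply: filterI NV _; apply: open_nbhs_nbhs; split.
    exact: locally_connected_component_open.
  exact: connected_component_refl.
have [f [cf _ fx0 fW]] := (completely_regularP (R := R)).1 crX x0 _
  (open_closedC (@open_interior _ W)) (fun nW => nW NW).
have small e : 0 < e -> ~` W `<=` [set z | 1 - f z < e].
  by move=> e0 z nWz /=; rewrite fW ?subrr // => /interior_subset.
exists (fun z => 1 - f z); last by rewrite fx0 subr0.
split=> [z|y e e0]; first exact: (continuousB (@cst_continuous _ R 1 z) (cf z)).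
have [Kx0y|nKx0y] := pselect (component x0 y).
  rewrite /escaping_filter -(same_connected_component Kx0y) -/(escaping_filter x0).
  apply: filterS FA => z Az; apply: small => // -[Vz _].
  by have : (A `&` V) z by []; rewrite AV0.
have [_ FyK _] := escaping_filterP y.
apply: filterS FyK => z Kyz; apply: small => // -[_ Kx0z]; apply: nKx0y.
rewrite (same_connected_component Kx0z) -(same_connected_component Kyz).
exact: connected_component_refl.
Qed.

Lemma inf_closure_component x : closure (Some @` component x : set Xstar) None.
Proof.
rewrite closureEnbhs => B D GB [h vh hD].
have [y [Kxy hy]] := vanishing_meets_component x vh.
by exists (Some y); split; [apply: GB; exists y|apply: hD].
Qed.

Lemma Xstar_connected (x0 : X) : connected [set: Xstar].
Proof.
have -> : [set: Xstar] =
    \bigcup_(x in [set: X]) closure (Some @` component x : set Xstar).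
  apply/seteqP; split => // -[y|] _.
    exists y => //; apply: subset_closure; exists y => //.
    exact: connected_component_refl.
  by exists x0 => //; exact: inf_closure_component.
apply: bigcup_connected => [|x _].
  by exists None => x _; exact: inf_closure_component.
apply/connected_closure/connected_continuous_connected.
  exact: component_connected.
exact/continuous_subspaceT/Some_continuous.
Qed.

Lemma Xstar_dense (x0 : X) : dense (range (Some : X -> Xstar)).
Proof.
move=> O [[y|] Oy] oO; first by exists (Some y); split => //; exists y.
have [h vh hO] : nbhs (None : Xstar) O by exact: open_nbhs_nbhs.
have [y [_ hy]] := vanishing_meets_component x0 vh.
by exists (Some y); split; [apply: hO|exists y].
Qed.

Lemma Xstar_accessible : accessible_space X -> accessible_space Xstar.
Proof.
move=> accX [a|] [b|] ab.
- have /(accX a b) [A [oA aA bA]] : a != b by apply: contra ab => /eqP ->.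
  exists (Some @` A); split; first exact: open_Some_image.
    by rewrite inE; exists a => //; rewrite -inE.
  by rewrite inE => -[z Az [zb]]; move: bA; rewrite inE; apply; rewrite -zb.
- exists (range Some); split; first exact/open_Some_image/openT.
    by rewrite inE; exists a.
  by rewrite inE => -[].
- have [k vk kb] := vanishing_separating b.
  exists (basic_inf k); split; first exact: basic_inf_open.
    by rewrite inE.
  by rewrite inE /= kb ltxx.
- by rewrite eqxx in ab.
Qed.

Lemma continuous_at_Some (f : Xstar -> R) x :
  {for x, continuous (f \o Some)} -> {for Some x, continuous f}.
Proof. by []. Qed.

Lemma continuous_at_inf (f : Xstar -> R) :
  (forall e, 0 < e -> exists2 h, vanishing h &
     forall x, h x < 1 -> `|f None - f (Some x)| < e) ->
  {for None, continuous f}.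
Proof.
move=> fe U /nbhs_ballP [e e0 fU]; have [h vh hf] := fe e e0.
exists h => // -[x|] /= hx; apply: fU; rewrite /ball /=; first exact: hf.
by rewrite subrr normr0.
Qed.

Lemma Xstar_separate_Some x0 (B : set Xstar) : closed B -> ~ B (Some x0) ->
  exists f : Xstar -> R, [/\ continuous f, forall z, 0 <= f z <= 1,
                           f (Some x0) = 0 & forall z, B z -> f z = 1].
Proof.
move=> clB nBx0; have oB : open (~` B) by rewrite openC.
have : nbhs (Some x0 : Xstar) (~` B) by exact: open_nbhs_nbhs.
rewrite nbhs_Some => nB.
have [g [cg g01 gx0 gB]] := (completely_regularP (R := R)).1 crX x0 _
  (open_closedC (@open_interior _ (Some @^-1` ~` B))) (fun H => H nB).
have [k [ck vk] kx0] := vanishing_separating x0.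
have k_itv x : 0 <= clamp (1 - k x) <= 1 := clamp_itv (1 - k x).
exists (fun y => if y is Some x then Num.max (g x) (clamp (1 - k x)) else 1); split.
- move=> [x|].
    apply: continuous_at_Some; apply: continuous_max; first exact: cg.
    apply: (@continuous_comp _ _ _ (fun x => 1 - k x) clamp).
      exact: (continuousB (@cst_continuous _ R 1 x) (ck x)).
    exact: clamp_continuous.
  apply: continuous_at_inf => e e0.
  have [h vh hk] := vanishing_lt e0 (conj ck vk); exists h => // x /hk kx.
  have [/andP[_ g1] /andP[_ c1]] := (g01 x, k_itv x).
  have m1 : Num.max (g x) (clamp (1 - k x)) <= 1 by rewrite ge_max g1 c1.
  have m2 : 1 - e < Num.max (g x) (clamp (1 - k x)).
    by rewrite lt_max; apply/orP; right; apply: clamp_gt => //; lra.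
  by rewrite ger0_norm; lra.
- move=> [x|]; last by rewrite ler01 lexx.
  have [/andP[g0 g1] /andP[c0 c1]] := (g01 x, k_itv x).
  by rewrite le_max ge_max g0 g1 c1.
- by rewrite gx0 kx0 subrr clamp_le0 // maxxx.
- move=> [x|//] Bx; rewrite gB; last by move=> /interior_subset; apply.
  by apply/max_idPl; have /andP[] := k_itv x.
Qed.

Lemma Xstar_separate_inf (B : set Xstar) : closed B -> ~ B None ->
  exists f : Xstar -> R, [/\ continuous f, forall z, 0 <= f z <= 1,
                           f None = 0 & forall z, B z -> f z = 1].
Proof.
move=> clB nBinf; have oB : open (~` B) by rewrite openC.
have [h vh hB] : nbhs (None : Xstar) (~` B) by exact: open_nbhs_nbhs.
exists (fun y => if y is Some x then clamp (h x) else 0); split.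
- move=> [x|].
    apply: continuous_at_Some.
    exact: (@continuous_comp _ _ _ h clamp _ (vh.1 x) (clamp_continuous _)).
  apply: continuous_at_inf => e e0.
  have [h' vh' hh'] := vanishing_lt e0 vh; exists h' => // x /hh' hx.
  rewrite sub0r normrN ger0_norm; first exact: clamp_lt.
  by have /andP[] := clamp_itv (h x).
- by move=> [x|]; [exact: clamp_itv|rewrite lexx ler01].
- by [].
- move=> [x|/hB //] Bx; apply: clamp_ge1; rewrite leNgt; apply/negP => hx.
  exact: (hB (Some x)).
Qed.

Lemma Xstar_completely_regular : completely_regular_space Xstar.
Proof.
apply/(completely_regularP (R := R)) => -[x0|] B.
  exact: Xstar_separate_Some.
exact: Xstar_separate_inf.
Qed.

Lemma closure_preimage_Some {E : set Xstar} {x} :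
  closure (Some @^-1` E) x -> closure E (Some x).
Proof. by move=> clx B /clx [z [Ez Bz]]; exists (Some z). Qed.

Lemma rel_closed_preimage_Some {S E : set Xstar} :
  rel_closed S E -> rel_closed (Some @^-1` S) (Some @^-1` E).
Proof.
move=> [ES clE]; split=> [x /ES //|x [/closure_preimage_Some clx Sx]].
exact: clE.
Qed.

Lemma inf_notin_closure (G : set Xstar) : ~ closure G None ->
  exists2 h, vanishing h & forall x, h x < 1 -> ~ G (Some x).
Proof.
move=> /existsNP [B] /not_implyP [[h vh hB]] /set0P/negP; rewrite negbK => /eqP GB0.
exists h => // x hx Gx; have : (G `&` B) (Some x) by split; [|exact: hB].
by rewrite GB0.
Qed.

Lemma rel_normal_Xstar_fin (S : set Xstar) : ~ S None ->
  rel_normal (Some @^-1` S) -> rel_normal S.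
Proof.
move=> nSinf nS E G rcE rcG EG.
have [|Q1 [Q2 [oQ1 oQ2 EQ1 GQ2 QQ]]] :=
  nS _ _ (rel_closed_preimage_Some rcE) (rel_closed_preimage_Some rcG).
  by rewrite -preimage_setI EG preimage_set0.
exists (Some @` Q1), (Some @` Q2); split; try exact: open_Some_image.
- by move=> [x|/rcE.1 //] Ex; exists x => //; exact: EQ1.
- by move=> [x|/rcG.1 //] Gx; exists x => //; exact: GQ2.
- apply/seteqP; split => // _ [[[x Q1x <-] [z Q2z [zx]]] Sx]; subst z.
  by have : (Q1 `&` Q2 `&` Some @^-1` S) x by []; rewrite QQ.
Qed.

(* As [None] is not in the closure of [G], some [basic_inf h] misses [G]; enlarging
   [E] by the closed set [[set x | h x <= 1/2]] and separating within [X] then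
   yields a neighbourhood of [None] around [E]. *)
Lemma rel_separated_inf (S E G : set Xstar) : S None -> ~ G None ->
  (forall A, closed A -> rel_normal (Some @^-1` S `|` A)) ->
  rel_closed S E -> rel_closed S G -> E `&` G = set0 -> rel_separated S E G.
Proof.
move=> Sinf nGinf nS rcE [GS clG] EG.
have [h vh hG] : exists2 h, vanishing h & forall x, h x < 1 -> ~ G (Some x).
  by apply: inf_notin_closure => clGinf; exact/nGinf/clG.
pose A := h @^-1` [set r : R | r <= 2^-1].
have clA : closed A.
  by apply: preimage_closed; [move=> x _; exact: vh.1|exact: closed_le].
have Ah x : A x -> h x < 1 by rewrite /A /=; lra.
pose T := Some @^-1` S `|` A.
have rcE' : rel_closed T (Some @^-1` E `|` A).
  split=> [x [/rcE.1|]|x [clx Tx]]; [by left|by right|].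
  have [Ax|nAx] := pselect (A x); [by right|left].
  have Sx : S (Some x) by case: Tx.
  move: clx; rewrite closureU -((closure_id A).1 clA) => -[clx|//].
  exact: (rel_closed_preimage_Some rcE).2.
have rcG' : rel_closed T (Some @^-1` G).
  split=> [x /GS|x [clx [Sx|/Ah hx]]]; [by left| |].
    exact: clG (conj (closure_preimage_Some clx) Sx).
  have nbhs_hx : nbhs (Some x : Xstar) (basic_inf h).
    by apply: open_nbhs_nbhs; split => //; exact: basic_inf_open.
  have [[z|] [Gz hz]] := closure_preimage_Some clx _ nbhs_hx.
  - by case: (hG _ hz Gz).
  - by case: (nGinf Gz).
have EG' : (Some @^-1` E `|` A) `&` Some @^-1` G = set0.
  apply/seteqP; split => // x [[Ex|/Ah hx] Gx]; last exact: hG hx Gx.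
  by have : (E `&` G) (Some x) by []; rewrite EG.
have [Q1 [Q2 [oQ1 oQ2 EQ1 GQ2 QQ]]] := nS A clA _ _ rcE' rcG' EG'.
exists (fun y => if y is Some x then Q1 x else True), (Some @` Q2); split.
- apply/Xstar_openP; split => [x Q1x|_]; first exact: open_nbhs_nbhs.
  exists (fun x => 2 * h x); first exact: vanishing_scale.
  by move=> [x|//] /= hx; apply: EQ1; right; rewrite /A /=; lra.
- exact: open_Some_image.
- by move=> [x|//] Ex; apply: EQ1; left.
- by move=> [x|//] Gx; exists x => //; exact: GQ2.
- apply/seteqP; split => // y [[/= Q1y [x Q2x xy]] Sy]; subst y.
  have : (Q1 `&` Q2 `&` T) x by split => //; left.
  by rewrite QQ.
Qed.

Lemma rel_normal_Xstar_inf (S : set Xstar) : S None ->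
  (forall A, closed A -> rel_normal (Some @^-1` S `|` A)) -> rel_normal S.
Proof.
move=> Sinf nS E G rcE rcG EG.
have [Ginf|nGinf] := pselect (G None); last exact: rel_separated_inf.
apply/rel_separatedC/rel_separated_inf => //; last by rewrite setIC.
by move=> Einf; have : (E `&` G) None by []; rewrite EG.
Qed.

Section Some_image.
Variable A : set X.
Local Notation A' := (Some @` A : set Xstar).

Let to_image (z : set_type A) : set_type A' :=
  exist _ (Some (val z)) (mem_set (ex_intro2 _ _ (val z) (set_valP z) erefl)).

Let from_image (w : set_type A') : set_type A :=
  let c := cid2 (set_valP w) in exist _ (sval c) (mem_set (svalP c).1).

Let from_imageK w : Some (val (from_image w)) = val w.
Proof. by rewrite /from_image /=; case: cid2 => x /= ? ->. Qed.

Lemma homeomorphic_Some_image : homeomorphic (set_type A) (set_type A').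
Proof.
exists to_image, from_image; split.
- apply: continuous_comp_initial => z.
  have -> : set_val \o to_image = Some \o (@set_val X A) by [].
  exact/continuous_comp/Some_continuous/initial_continuous.
- apply: continuous_comp_initial => w U /= nU.
  have nW : nbhs (set_val w : Xstar) (Some @` U).
    rewrite set_valE -from_imageK nbhs_Some.
    by move: nU; apply: filterS => u Uu; exists u.
  move: (@initial_continuous _ _ (@set_val Xstar A') w _ nW) => /=.
  change (nbhs w (set_val @^-1` (Some @` U)) ->
          nbhs w ((set_val \o from_image) @^-1` U)).
  apply: filterS => w' /= [u Uu uw].
  have := from_imageK w'; rewrite -[val w']/(set_val w') -uw => -[E].
  by rewrite set_valE /= E.
- by move=> z; apply: val_inj; have [] := from_imageK (to_image z).
- by move=> w; apply: val_inj; exact: from_imageK.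
Qed.

End Some_image.

(* The complement of [basic_inf h] is a copy of the closed set [[set x | 1 <= h x]]. *)
Lemma Xstar_property (P : topologicalType -> Prop) : topological_property P ->
  closed_hereditary P -> co_local P -> P X -> P Xstar.
Proof.
move=> tP chP clP PX; apply: clP.
exists None, [set B | exists2 h, vanishing h & basic_inf h = B]; split.
  split=> [B [h vh <-]|N [h vh hN]]; first by split => //; exact: basic_inf_open.
  by exists (basic_inf h) => //; exists h.
move=> _ [h vh <-].
have -> : ~` basic_inf h = Some @` (~` (h @^-1` [set r | r < 1])).
  by apply/seteqP; split => [[x|] //= hx|_ [x hx <-] //]; exists x.
apply: tP (homeomorphic_Some_image _) (chP _ _ PX _).
apply/open_closedC/open_comp; last exact: open_lt.
by move=> x _; exact: vh.1.
Qed.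

Lemma Xstar_Ti i : Ti i X -> Ti i Xstar.
Proof.
case: i => /= -[TX accX]; split; try exact: Xstar_accessible.
- exact: Xstar_completely_regular.
- apply/normal_rel_normalT/rel_normal_Xstar_inf => // A _.
  by rewrite preimage_setT setTU; exact/normal_rel_normalT.
- move=> S; apply/normal_subspaceP; have [Sinf|nSinf] := pselect (S None).
    by apply: rel_normal_Xstar_inf => // A _; exact/normal_subspaceP.
  by apply: rel_normal_Xstar_fin => //; exact/normal_subspaceP.
Qed.

Lemma one_point_connectification_exists i (P : topologicalType -> Prop) :
  topological_property P -> closed_hereditary P -> co_local P ->
  (exists x : X, True) -> Ti i X -> P X ->
  exists (Y : topologicalType) (f : X -> Y),
    [/\ one_point_connectification f, Ti i Y & P Y].
Proof.
move=> tP chP clP [x0 _] TiX PX; exists Xstar, Some; split.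
- split; [exact: Some_embedding|exact: Xstar_connected x0|exact: Xstar_dense x0|].
  by exists None; exact: Xstar_range_compl.
- exact: Xstar_Ti.
- exact: Xstar_property.
Qed.

End one_point_connectification.

Theorem theorem2p5 (i : sep_index) (P : topologicalType -> Prop) :
  topological_property P -> closed_hereditary P -> co_local P ->
  finite_closed_sums P ->
  forall X : topologicalType,
    (exists x : X, True) ->
    locally_connected X -> Ti i X -> P X ->
    ((exists (Y : topologicalType) (f : X -> Y),
        [/\ one_point_connectification f, Ti i Y & P Y]) <->
     ~ (exists x : X, compact (connected_component setT x))).
Proof.
move=> tP chP clP _ X X0 lcX TiX PX.
split=> [[Y [f [opcf TiY _]]] [x]|no_compact].
  exact: connectification_no_compact_component lcX TiY opcf x.
apply: (@one_point_connectification_exists Rdefinitions.R) => //.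
- by move=> x cpt; apply: no_compact; exists x.
- exact: (Ti_completely_regular TiX).1.
Qed.
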